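(* Let $\eta(n)\in\mathbb N^N$ denote random allocation after $n$ steps ($\eta_x(n)$ = number of the first $n$ i.i.d. uniform draws from $\{1,\dots,N\}$ equal to $x$). Let $T_N=\lfloor N/\log N\rfloor$ and $H_N=\log N/\log\log N$. For every $\alpha\in[\tfrac12,1)$ and every $\delta\in(0,(1-\alpha)/2)$, with probability at least $1-\varepsilon_N$ where $\sum_N\varepsilon_N<\infty$ (in the paper's words: almost surely, for $N$ large enough), $$\big|\{x\in\{1,\dots,N\}:\ \eta_x(T_N)>\delta H_N\}\big|\ge N^{\alpha}.$$ *)

From mathcomp Require Import all_boot.
From Stdlib Require Import Reals.

Set Implicit Arguments.
Unset Strict Implicit.
Unset Printing Implicit Defensive.

Definition Rltb (a b : R) : bool := if Rlt_dec a b then true else false.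
Definition Rleb (a b : R) : bool := if Rle_dec a b then true else false.

Definition unifP (T : finType) (A : {pred T}) : R :=
  INR #|A| / INR #|T|.

Definition TN (N : nat) : nat := Z.to_nat (Int_part (INR N / ln (INR N))).

Definition HN (N : nat) : R := ln (INR N) / ln (ln (INR N)).

(* A sample of n i.i.d. uniform draws from {1..N} (encoded as 'I_N = {0..N-1})
   is w : {ffun 'I_n -> 'I_N}; eta_x(n) = number of draws equal to x. *)
Definition eta (N n : nat) (w : {ffun 'I_n -> 'I_N}) (x : 'I_N) : nat :=
  #|[set i : 'I_n | w i == x]|.

Definition good_event (N : nat) (alpha delta : R)
  (w : {ffun 'I_(TN N) -> 'I_N}) : bool :=
  Rleb (Rpower (INR N) alpha)
       (INR #|[set x : 'I_N | Rltb (delta * HN N) (INR (eta w x))]|).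

(* Let f(w) be the number of bins x with eta_x(T_N) > delta H_N.  Changing a single draw
   moves f by at most one, so the bounded-differences (Azuma-McDiarmid) inequality gives
   P(f <= E f - t) <= exp (-t^2 / (8 T_N)).  With m = floor (delta H_N) + 1,
   E f >= N P(eta_x(T_N) = m) = N C(T_N, m) (N - 1)^(T_N - m) / N^T_N, and this is at least N^b
   for large N whenever b + 2 delta < 1.  Choosing alpha < b and 2 b > 1 (possible as
   alpha >= 1/2) and t = N^b / 2 >= N^alpha, the failure probability is at most
   exp (-N^(2b) / (32 T_N)) <= N^-4 <= 1 / ((N + 1) (N + 2)), which is summable. *)

From Pilot Require Import Defs.
From HB Require Import structures.
From mathcomp Require Import all_boot.
From Stdlib Require Import Reals Lra Lia ZArith.
Import ssrnat.

Set Implicit Arguments.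
Unset Strict Implicit.
Unset Printing Implicit Defensive.

Section ConsFfun.
Variable A : finType.

Definition cons_ff n (a : A) (v : {ffun 'I_n -> A}) : {ffun 'I_n.+1 -> A} :=
  [ffun i => if unlift ord0 i is Some j then v j else a].

Lemma cons_ff0 n a (v : {ffun 'I_n -> A}) : cons_ff a v ord0 = a.
Proof. by rewrite ffunE unlift_none. Qed.

Lemma cons_ffS n a (v : {ffun 'I_n -> A}) j : cons_ff a v (lift ord0 j) = v j.
Proof. by rewrite ffunE liftK. Qed.

Lemma cons_ff_eq_except n a b (v v' : {ffun 'I_n -> A}) (i : 'I_n.+1) :
  (forall j, lift ord0 j != i -> v j = v' j) -> (i != ord0 -> a = b) ->
  forall j, j != i -> cons_ff a v j = cons_ff b v' j.
Proof.
move=> Evv' Eab j; case: (unliftP ord0 j) => [k ->|->] neq_ji.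
  by rewrite !cons_ffS Evv'.
by rewrite !cons_ff0 Eab // eq_sym.
Qed.

Lemma big_cons_ff (Rt : Type) (idx : Rt) (op : Monoid.com_law idx) n
    (F : {ffun 'I_n.+1 -> A} -> Rt) :
  \big[op/idx]_(w : {ffun 'I_n.+1 -> A}) F w =
  \big[op/idx]_(a : A) \big[op/idx]_(v : {ffun 'I_n -> A}) F (cons_ff a v).
Proof.
rewrite pair_big /= (reindex (fun p => cons_ff p.1 p.2)) //=.
exists (fun w => (w ord0, [ffun j => w (lift ord0 j)])) => [[a v] _|w _] /=.
  by rewrite cons_ff0; congr pair; apply/ffunP=> j; rewrite ffunE cons_ffS.
by apply/ffunP=> i; rewrite ffunE; case: unliftP => [j ->|->] //; rewrite ffunE.
Qed.

End ConsFfun.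

Open Scope R_scope.

Lemma Rplus_associative : associative Rplus.
Proof. by move=> *; rewrite Rplus_assoc. Qed.

HB.instance Definition _ :=
  Monoid.isComLaw.Build R 0 Rplus Rplus_associative Rplus_comm Rplus_0_l.
HB.instance Definition _ := Monoid.isMulLaw.Build R 0 Rmult Rmult_0_l Rmult_0_r.
HB.instance Definition _ :=
  Monoid.isAddLaw.Build R Rmult Rplus Rmult_plus_distr_r Rmult_plus_distr_l.

Definition rsum (X : finType) (F : X -> R) : R := \big[Rplus/0]_(x : X) F x.

Section RealSums.
Variable X : finType.
Implicit Types F G : X -> R.

Lemma rsum_ext F G : (forall x, F x = G x) -> rsum F = rsum G.
Proof. by move=> EFG; apply: eq_bigr. Qed.

Lemma rsum_le F G : (forall x, F x <= G x) -> rsum F <= rsum G.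
Proof.
move=> leFG; rewrite /rsum; elim/big_rec2: _ => [|x y1 y2 _]; first lra.
by have := leFG x; lra.
Qed.

Lemma rsumD F G : rsum (fun x => F x + G x) = rsum F + rsum G.
Proof. exact: big_split. Qed.

Lemma rsumZ c F : rsum (fun x => c * F x) = c * rsum F.
Proof. by rewrite /rsum big_distrr. Qed.

Lemma rsumB F G : rsum (fun x => F x - G x) = rsum F - rsum G.
Proof.
have -> : rsum F - rsum G = rsum F + rsum (fun x => -1 * G x) by rewrite rsumZ; ring.
by rewrite -rsumD; apply: rsum_ext => x; ring.
Qed.

Lemma rsum_const c : rsum (fun _ : X => c) = INR #|X| * c.
Proof.
rewrite /rsum big_const; elim: #|X| => [|n IH]; first by rewrite Rmult_0_l.
by rewrite iterS IH S_INR; ring.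
Qed.

Lemma rsum_abs F : Rabs (rsum F) <= rsum (fun x => Rabs (F x)).
Proof.
rewrite /rsum; elim/big_rec2: _ => [|x y1 y2 _]; first by rewrite Rabs_R0; lra.
by have := Rabs_triang (F x) y2; lra.
Qed.

Lemma rsum_indicator (P : pred X) :
  rsum (fun x => if P x then 1 else 0) = INR #|[set x | P x]|.
Proof.
rewrite -sum1dep_card (big_morph INR plus_INR (erefl _)) big_mkcond.
by apply: eq_bigr => x _; case: (P x).
Qed.

Lemma rsum_exchange (Y : finType) (F : X -> Y -> R) :
  rsum (fun x => rsum (F x)) = rsum (fun y => rsum (fun x => F x y)).
Proof. exact: exchange_big. Qed.
End RealSums.

Lemma exp_le x y : x <= y -> exp x <= exp y.
Proof. by case=> [/exp_increasing/Rlt_le | ->]; [| right]. Qed.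

Lemma exp_pow x n : exp x ^ n = exp (INR n * x).
Proof.
elim: n => [|n IH]; first by rewrite Rmult_0_l exp_0.
by rewrite -tech_pow_Rmult IH -exp_plus S_INR; congr exp; ring.
Qed.

Lemma exp_le_quadratic y : y <= /2 -> exp y <= 1 + y + 2 * y ^ 2.
Proof.
move=> le_y_half; have := exp_ineq1_le (- y); rewrite exp_Ropp => le_exp_inv.
have exp_gt0 := exp_pos y.
(* [(1 - y) (1 + y + 2 y^2) = 1 + y^2 (1 - 2 y) >= 1] *)
have : 1 <= (1 - y) * (1 + y + 2 * y ^ 2) by nra.
have : (1 - y) * exp y <= 1.
  have := Rmult_le_compat_r (exp y) _ _ (Rlt_le _ _ exp_gt0) le_exp_inv.
  by rewrite Rinv_l; lra.
have : 0 < 1 + y + 2 * y ^ 2 by nra.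
nra.
Qed.

Section BoundedDifferences.
Variable A : finType.
Hypothesis A_gt0 : (0 < #|A|)%N.
Let K := INR #|A|.

Let K_gt0 : 0 < K.
Proof. exact/lt_0_INR/ltP. Qed.

Definition bounded_diff n (f : {ffun 'I_n -> A} -> R) :=
  forall (w w' : {ffun 'I_n -> A}) (i : 'I_n),
    (forall j, j != i -> w j = w' j) -> Rabs (f w - f w') <= 1.

Definition avg n (f : {ffun 'I_n -> A} -> R) : R := rsum f / K ^ n.

Definition avg_first n (f : {ffun 'I_n.+1 -> A} -> R) (v : {ffun 'I_n -> A}) : R :=
  rsum (fun a => f (cons_ff a v)) / K.

Lemma Rabs_mean_le1 (G : A -> R) : (forall a, Rabs (G a) <= 1) -> Rabs (rsum G / K) <= 1.
Proof.
move=> G_le1; rewrite /Rdiv Rabs_mult Rabs_inv (Rabs_pos_eq K); last lra.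
apply: (Rmult_le_reg_r K) => //; rewrite Rmult_assoc Rinv_l ?Rmult_1_r ?Rmult_1_l; last lra.
apply: Rle_trans (rsum_abs _) _; rewrite -[K]Rmult_1_r -rsum_const.
exact: rsum_le.
Qed.

Lemma rsum_exp_centered_le (X : A -> R) s :
  rsum X = 0 -> (forall a, Rabs (X a) <= 1) -> 0 <= s <= /2 ->
  rsum (fun a => exp (s * X a)) <= K * (1 + 2 * s ^ 2).
Proof.
move=> sumX0 X_le1 s_bd.
apply: Rle_trans (rsum_le (G := fun a => 1 + s * X a + 2 * s ^ 2) _) _.
  move=> a; have Xa_le1 := X_le1 a; have := Rle_abs (X a).
  have : X a ^ 2 <= 1 by rewrite -pow2_abs; have := Rabs_pos (X a); nra.
  move=> Xa2 Xa; apply: Rle_trans (exp_le_quadratic _) _; first nra.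
  have : (s * X a) ^ 2 <= s ^ 2 by rewrite Rpow_mult_distr; nra.
  lra.
rewrite !rsumD rsumZ sumX0 !rsum_const -/K; lra.
Qed.

Lemma avg_avg_first n (f : {ffun 'I_n.+1 -> A} -> R) : avg (avg_first f) = avg f.
Proof.
rewrite /avg /avg_first /rsum big_cons_ff exchange_big -big_distrl /=.
by field; split; [apply: pow_nonzero|]; lra.
Qed.

Lemma bounded_diff_avg_first n (f : {ffun 'I_n.+1 -> A} -> R) :
  bounded_diff f -> bounded_diff (avg_first f).
Proof.
move=> f_bd v v' j Evv'; rewrite /avg_first -Rdiv_minus_distr -rsumB.
apply: Rabs_mean_le1 => a; apply: (f_bd _ _ (lift ord0 j)).
by apply: cons_ff_eq_except => // k; rewrite (inj_eq lift_inj) => /Evv'.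
Qed.

Lemma Rabs_avg_first_sub n (f : {ffun 'I_n.+1 -> A} -> R) v a :
  bounded_diff f -> Rabs (avg_first f v - f (cons_ff a v)) <= 1.
Proof.
move=> f_bd; have -> : avg_first f v - f (cons_ff a v) =
    rsum (fun b => f (cons_ff b v) - f (cons_ff a v)) / K.
  by rewrite /avg_first rsumB rsum_const -/K; field; lra.
by apply: Rabs_mean_le1 => b; apply: (f_bd _ _ ord0); apply: cons_ff_eq_except.
Qed.

Lemma rsum_exp_lower_dev_le n (f : {ffun 'I_n -> A} -> R) s :
  bounded_diff f -> 0 <= s <= /2 ->
  rsum (fun w => exp (s * (avg f - f w))) <= K ^ n * (1 + 2 * s ^ 2) ^ n.
Proof.
move=> + s_bd; elim: n f => [|n IH] f f_bd.
  have w0E (w : {ffun 'I_0 -> A}) : w = ffun0 (card_ord 0) by apply/ffunP => -[].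
  have rsum0 (F : {ffun 'I_0 -> A} -> R) : rsum F = F (ffun0 (card_ord 0)).
    rewrite (@rsum_ext _ F (fun _ => F (ffun0 (card_ord 0)))); last by move=> w; rewrite (w0E w).
    by rewrite rsum_const card_ffun card_ord /=; ring.
  by rewrite rsum0 /avg rsum0 /= Rdiv_1_r Rminus_diag Rmult_0_r exp_0; lra.
(* Condition on the first draw: the inner sum is handled by [rsum_exp_centered_le],
   the outer one by induction applied to [avg_first f]. *)
set g := avg_first f.
have step v : rsum (fun a => exp (s * (avg f - f (cons_ff a v)))) <=
              exp (s * (avg g - g v)) * (K * (1 + 2 * s ^ 2)).
  rewrite -avg_avg_first -/g (rsum_ext (G := fun a =>
     exp (s * (avg g - g v)) * exp (s * (g v - f (cons_ff a v))))) => [|a]; last first.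
    by rewrite -exp_plus; congr exp; ring.
  rewrite rsumZ; apply: Rmult_le_compat_l; first exact/Rlt_le/exp_pos.
  apply: rsum_exp_centered_le => // [|a]; last exact: Rabs_avg_first_sub.
  by rewrite rsumB rsum_const /g /avg_first -/K; field; lra.
rewrite /rsum big_cons_ff exchange_big -/(rsum _).
apply: Rle_trans (rsum_le step) _.
rewrite (rsum_ext (G := fun v => K * (1 + 2 * s ^ 2) * exp (s * (avg g - g v)))) => [|v].
  rewrite rsumZ; apply: Rle_trans (Rmult_le_compat_l _ _ _ _ (IH g _)) _.
  - by apply: Rmult_le_pos; nra.
  - exact: bounded_diff_avg_first.
  - by apply: Req_le; rewrite /=; ring.
by rewrite Rmult_comm.
Qed.

Lemma card_lower_dev_le n (f : {ffun 'I_n -> A} -> R) t :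
  bounded_diff f -> (0 < n)%N -> 0 <= t <= 2 * INR n ->
  INR #|[set w | Rleb (f w) (avg f - t)]| <= K ^ n * exp (- (t ^ 2 / (8 * INR n))).
Proof.
move=> f_bd n_gt0 t_bd; have n_gt0R : 0 < INR n by exact/lt_0_INR/ltP.
(* Exponential Markov inequality with the optimal [s = t / (4 n)]. *)
set s := t / (4 * INR n).
have s_bd : 0 <= s <= /2.
  by split; apply: (Rmult_le_reg_r (4 * INR n)); rewrite /s; field_simplify; lra.
have markov : INR #|[set w | Rleb (f w) (avg f - t)]| * exp (s * t) <=
              rsum (fun w => exp (s * (avg f - f w))).
  rewrite -rsum_indicator Rmult_comm -rsumZ; apply: rsum_le => w.
  rewrite /Rleb; case: Rle_dec => dev; last by rewrite Rmult_0_r; apply/Rlt_le/exp_pos.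
  by rewrite Rmult_1_r; apply: exp_le; nra.
have := rsum_exp_lower_dev_le f_bd s_bd.
have : (1 + 2 * s ^ 2) ^ n <= exp (2 * s ^ 2) ^ n.
  by apply: pow_incr; split; [nra | apply: exp_ineq1_le].
rewrite exp_pow => pow_le exp_moment.
have exp_st := exp_pos (s * t).
have Kn := pow_lt _ n K_gt0.
apply: (Rmult_le_reg_r (exp (s * t))) => //.
rewrite Rmult_assoc -exp_plus.
have -> : - (t ^ 2 / (8 * INR n)) + s * t = INR n * (2 * s ^ 2) by rewrite /s; field; lra.
nra.
Qed.

End BoundedDifferences.

Section Occupancy.
Variable N : nat.

Lemma eta_cons n (a : 'I_N) (v : {ffun 'I_n -> 'I_N}) (x : 'I_N) :
  Defs.eta (cons_ff a v) x = ((a == x) + Defs.eta v x)%N.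
Proof.
rewrite /Defs.eta -!sum1dep_card big_mkcond big_ord_recl cons_ff0 /=.
by congr addn; rewrite [RHS]big_mkcond; apply: eq_bigr => i _; rewrite cons_ffS.
Qed.

Lemma card_eta_eq n x m :
  #|[set w : {ffun 'I_n -> 'I_N} | Defs.eta w x == m]| = ('C(n, m) * N.-1 ^ (n - m))%N.
Proof.
elim: n m => [|n IH] m.
  have eta0 (w : {ffun 'I_0 -> 'I_N}) : Defs.eta w x = 0%N.
    by apply/eqP; rewrite cards_eq0; apply/eqP/setP => -[].
  have -> : [set w : {ffun 'I_0 -> 'I_N} | Defs.eta w x == m] =
            if m is 0 then setT else set0.
    by apply/setP => w; rewrite inE eta0; case: m => [|m]; rewrite inE.
  by case: m => [|m]; rewrite ?cardsT ?cards0 ?card_ffun ?card_ord.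
have inner (a : 'I_N) :
    \sum_(v : {ffun 'I_n -> 'I_N}) (if Defs.eta (cons_ff a v) x == m then 1 else 0)
    = #|[set v : {ffun 'I_n -> 'I_N} | ((a == x) + Defs.eta v x)%N == m]|.
  by rewrite -sum1dep_card [RHS]big_mkcond; apply: eq_bigr => v _; rewrite eta_cons.
rewrite -sum1dep_card big_mkcond (big_cons_ff (Monoid.ComLaw.clone _ _ addn _)) /=.
rewrite (eq_bigr _ (fun a _ => inner a)) (bigD1 x) //= eqxx.
rewrite (eq_bigr (fun=> #|[set v : {ffun 'I_n -> 'I_N} | Defs.eta v x == m]|)); last first.
  by move=> a /negbTE ->.
rewrite sum_nat_const cardC1 card_ord IH; clear inner; case: m => [|k].
  rewrite (_ : [set v | _] = set0) ?cards0; last by apply/setP => v; rewrite !inE.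
  by rewrite add0n !bin0 !subn0 !mul1n expnS.
rewrite (_ : [set v | _] = [set v | Defs.eta v x == k]); last by apply/setP => v; rewrite !inE.
rewrite IH binS mulnDl subSS; case: (ltnP k n) => [lt_kn | le_nk].
  by rewrite -(subnSK lt_kn) expnS addnC mulnCA.
by rewrite (@bin_small n k.+1) ?ltnS // !mul0n muln0 addn0.
Qed.
End Occupancy.

Lemma INR_expn m n : INR (m ^ n)%N = INR m ^ n.
Proof. by elim: n => // n IH; rewrite expnS mult_INR IH. Qed.

Lemma INR_pred n : (0 < n)%N -> INR n.-1 = INR n - 1.
Proof. by case: n => // n _; rewrite S_INR /=; ring. Qed.

Lemma Rltb_le_trans c a b : Rltb c a -> a <= b -> Rltb c b.
Proof.
rewrite /Rltb; case: Rlt_dec => // lt_ca _ le_ab.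
by case: Rlt_dec => // not_lt; exfalso; lra.
Qed.

Section HeavyBins.
Variables (N n : nat) (c : R).

Definition heavy_bins (w : {ffun 'I_n -> 'I_N}) : R :=
  INR #|[set x : 'I_N | Rltb c (INR (Defs.eta w x))]|.

Lemma heavy_bins_subset (w w' : {ffun 'I_n -> 'I_N}) i :
  (forall j, j != i -> w j = w' j) ->
  [set x | Rltb c (INR (Defs.eta w' x))] \subset w' i |: [set x | Rltb c (INR (Defs.eta w x))].
Proof.
move=> Eww'; apply/subsetP => x; rewrite in_setU1 !inE.
case: eqP => //= /eqP neq_x heavy_x; apply: (Rltb_le_trans heavy_x); apply/le_INR/leP.
apply/subset_leq_card/subsetP => j; rewrite !inE => /eqP w'j.
have neq_ji : j != i by apply: contraNneq neq_x => eq_ji; rewrite -eq_ji w'j.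
by rewrite Eww' // w'j.
Qed.

Lemma bounded_diff_heavy_bins : bounded_diff heavy_bins.
Proof.
have heavy_bins_le_succ (w w' : {ffun 'I_n -> 'I_N}) i :
    (forall j, j != i -> w j = w' j) -> heavy_bins w' <= heavy_bins w + 1.
  move=> /heavy_bins_subset/subset_leq_card; rewrite cardsU1 => le_card.
  rewrite /heavy_bins -S_INR; apply/le_INR/leP; apply: leq_trans le_card _.
  by rewrite addnC -addn1 leq_add2l leq_b1.
move=> w w' i Eww'; apply: Rabs_le; split.
  by have := heavy_bins_le_succ _ _ _ Eww'; lra.
have Ew'w j : j != i -> w' j = w j by move=> /Eww' ->.
by have := heavy_bins_le_succ _ _ _ Ew'w; lra.
Qed.

Lemma avg_heavy_bins_ge m : (0 < N)%N -> c < INR m ->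
  INR N * (INR 'C(n, m) * (INR N - 1) ^ (n - m)) / INR N ^ n <= avg heavy_bins.
Proof.
move=> N_gt0 lt_cm; rewrite /avg card_ord; apply: Rmult_le_compat_r.
  by apply/Rlt_le/Rinv_0_lt_compat/pow_lt/lt_0_INR/ltP.
rewrite /heavy_bins (rsum_ext (fun w => esym (rsum_indicator _))) rsum_exchange.
have -> : INR N * (INR 'C(n, m) * (INR N - 1) ^ (n - m)) =
          rsum (fun x : 'I_N => INR #|[set w : {ffun 'I_n -> 'I_N} | Defs.eta w x == m]|).
  rewrite (rsum_ext (fun x => congr1 INR (card_eta_eq n x m))) rsum_const card_ord.
  by rewrite mult_INR INR_expn INR_pred.
apply: rsum_le => x; rewrite -rsum_indicator; apply: rsum_le => w.
case: eqP => [->|_]; last by case: Rltb; lra.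
by rewrite /Rltb; case: Rlt_dec => /= heavy; lra.
Qed.
End HeavyBins.

Lemma unifP_ge (T : finType) (P : {pred T}) e :
  (0 < #|T|)%N -> INR #|[set x | ~~ P x]| <= e * INR #|T| -> 1 - e <= unifP P.
Proof.
move=> T_gt0; have T_gt0R : 0 < INR #|T| by exact/lt_0_INR/ltP.
rewrite (_ : #|[set x | ~~ P x]| = #|[predC P]|); last by apply: eq_card => x; rewrite !inE.
have := cardC P => /(congr1 INR); rewrite plus_INR /unifP => cardE le_compl.
apply: (Rmult_le_reg_r (INR #|T|)) => //.
by rewrite /Rdiv Rmult_assoc Rinv_l; lra.
Qed.

Lemma good_event_prob N alpha delta L : (0 < N)%N ->
  2 * Rpower (INR N) alpha <= L -> L <= 4 * INR (TN N) ->
  L <= avg (@heavy_bins N (TN N) (delta * HN N)) ->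
  1 - exp (- (L ^ 2 / (32 * INR (TN N)))) <=
  unifP (fun w : {ffun 'I_(TN N) -> 'I_N} => good_event alpha delta w).
Proof.
move=> N_gt0 le_alpha_L le_L_T le_L_avg.
have L_gt0 : 0 < L by have := exp_pos (alpha * ln (INR N)); rewrite /Rpower in le_alpha_L; lra.
have T_gt0 : (0 < TN N)%N by apply/ltP/INR_lt; change (INR 0) with 0; lra.
apply: unifP_ge; first by rewrite card_ffun !card_ord expn_gt0 N_gt0.
set f := @heavy_bins N (TN N) (delta * HN N).
have f_bd : bounded_diff f := @bounded_diff_heavy_bins N (TN N) (delta * HN N).
apply: Rle_trans (_ : INR #|[set w | Rleb (f w) (avg f - L / 2)]| <= _).
  apply/le_INR/leP/subset_leq_card/subsetP => w; rewrite !inE /good_event /Rleb.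
  case: Rle_dec => // not_good _; case: Rle_dec => // not_dev.
  change (~ Rpower (INR N) alpha <= f w) in not_good.
  by change (L <= avg f) in le_L_avg; exfalso; lra.
apply: Rle_trans (card_lower_dev_le (t := L / 2) _ f_bd T_gt0 _) _.
- by rewrite card_ord.
- lra.
- rewrite card_ffun !card_ord INR_expn Rmult_comm; apply: Req_le.
  by congr (exp _ * _); field; lra.
Qed.

Lemma expn_subn_le_ffact n m : ((n - m) ^ m <= n ^_ m)%N.
Proof.
elim: m => // m IH; rewrite ffactnSr expnS mulnC.
apply: leq_mul; last by rewrite subnS leq_pred.
by apply: leq_trans IH; case: m => // m; rewrite leq_exp2r // subnS leq_pred.
Qed.

Lemma fact_le_expn m : (m`! <= m ^ m)%N.
Proof.
elim: m => // m IH; rewrite factS expnS leq_mul2l /=.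
by apply: leq_trans IH _; case: m => // m; rewrite leq_exp2r.
Qed.

Lemma binR_ge n m : (0 < m)%N -> (m <= n)%N ->
  ((INR n - INR m) / INR m) ^ m <= INR 'C(n, m).
Proof.
move=> m_gt0 le_mn; have m_gt0R : 0 < INR m by exact/lt_0_INR/ltP.
have /leP/le_INR : ((n - m) ^ m <= 'C(n, m) * m ^ m)%N.
  by apply: leq_trans (expn_subn_le_ffact n m) _; rewrite -bin_ffact leq_mul2l fact_le_expn orbT.
rewrite mult_INR !INR_expn minus_INR; last exact/leP.
rewrite /Rdiv Rpow_mult_distr pow_inv => le_pow.
have := pow_lt _ m m_gt0R => m_pow_gt0.
apply: (Rmult_le_reg_r (INR m ^ m)) => //.
by rewrite Rmult_assoc Rinv_l; lra.
Qed.

Lemma pow_subr1_ge K k : 1 <= K -> K ^ k * (1 - INR k / K) <= (K - 1) ^ k.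
Proof.
move=> K_ge1; elim: k => [|k IH]; first by rewrite /=; lra.
rewrite S_INR /=; apply: Rle_trans (Rmult_le_compat_l (K - 1) _ _ _ IH); last lra.
have := pow_le K k ltac:(lra); have := pos_INR k => k_ge0 Kk_ge0.
have : 0 <= K ^ k * INR k / K by apply: Rmult_le_pos; [nra | apply/Rlt_le/Rinv_0_lt_compat; lra].
have -> : (K - 1) * (K ^ k * (1 - INR k / K)) =
          K * K ^ k * (1 - (INR k + 1) / K) + K ^ k * INR k / K by field; lra.
lra.
Qed.

(* The right-hand side is the expected number of the [K] bins receiving exactly [m] of [n] balls. *)
Lemma occupancy_mean_ge (K : R) n m : 1 <= K -> (0 < m <= n)%N -> 2 * (INR n - INR m) <= K ->
  K / 2 * ((INR n - INR m) / (INR m * K)) ^ m <=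
  K * (INR 'C(n, m) * (K - 1) ^ (n - m)) / K ^ n.
Proof.
move=> K_ge1 /andP[m_gt0 le_mn] le_nm_K.
have m_gt0R : 0 < INR m by exact/lt_0_INR/ltP.
have le_mnR : INR m <= INR n by exact/le_INR/leP.
have Kn : K ^ n = K ^ m * K ^ (n - m) by rewrite -pow_add plusE subnKC.
have Kpow_gt0 (k : nat) : 0 < K ^ k by apply: pow_lt; lra.
have half_le : K ^ (n - m) / 2 <= (K - 1) ^ (n - m).
  apply: Rle_trans (pow_subr1_ge (n - m) K_ge1); rewrite minus_INR; last exact/leP.
  have : (INR n - INR m) / K <= / 2.
    by apply: (Rmult_le_reg_r K); [lra | rewrite /Rdiv Rmult_assoc Rinv_l; lra].
  by have := Kpow_gt0 (n - m)%N; nra.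
have := binR_ge m_gt0 le_mn => le_bin.
have : 0 <= (INR n - INR m) / INR m.
  by apply: Rmult_le_pos; [lra | apply/Rlt_le/Rinv_0_lt_compat].
move=> /(pow_le _ m) pow_ge0.
rewrite Kn; have -> : (INR n - INR m) / (INR m * K) = (INR n - INR m) / INR m * / K by field; lra.
rewrite Rpow_mult_distr pow_inv.
apply: Rle_trans (_ : K * (((INR n - INR m) / INR m) ^ m * (K ^ (n - m) / 2)) /
                      (K ^ m * K ^ (n - m)) <= _).
  by apply: Req_le; field; split; apply/Rgt_not_eq/Kpow_gt0.
apply: Rmult_le_compat_r; first exact/Rlt_le/Rinv_0_lt_compat/Rmult_lt_0_compat.
apply: Rmult_le_compat_l; first lra.
by apply: Rmult_le_compat => //; have := Kpow_gt0 (n - m)%N; lra.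
Qed.

Lemma le_half_mul_pow K q r L m : 0 < q -> / q <= r -> 0 <= L -> 2 * q ^ m * L <= K ->
  L <= K / 2 * r ^ m.
Proof.
move=> q_gt0 le_qr L_ge0 le_L; have qm_gt0 := pow_lt _ m q_gt0.
have := pow_incr _ _ m (conj (Rlt_le _ _ (Rinv_0_lt_compat _ q_gt0)) le_qr).
rewrite pow_inv => le_pow.
have le_L_inv : L <= K / 2 * / q ^ m.
  apply: (Rmult_le_reg_r (2 * q ^ m)); first lra.
  have -> : K / 2 * / q ^ m * (2 * q ^ m) = K by field; lra.
  lra.
apply: Rle_trans le_L_inv _; apply: Rmult_le_compat_l => //; nra.
Qed.

Lemma ln_le x y : 0 < x -> x <= y -> ln x <= ln y.
Proof. by move=> x_gt0 [/(ln_increasing _ _ x_gt0)/Rlt_le | ->]; [| right]. Qed.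

(* [ln] is [0] on nonpositive arguments. *)
Lemma pos_of_ln_pos x : 0 < ln x -> 0 < x.
Proof. by rewrite /ln; case: Rlt_dec => // _; lra. Qed.

Lemma exp_ge_sqr x : 0 <= x -> x ^ 2 / 4 <= exp x.
Proof.
move=> x_ge0; have -> : exp x = exp (x / 2) * exp (x / 2) by rewrite -exp_plus; congr exp; field.
by have := exp_ineq1_le (x / 2); nra.
Qed.

Lemma INR_floor_bounds r : 0 <= r -> r - 1 < INR (Z.to_nat (Int_part r)) <= r.
Proof.
move=> r_ge0; have [le_r gt_r] := base_Int_part r.
have /lt_IZR floor_gt : IZR (-1) < IZR (Int_part r) by lra.
by rewrite INR_IZR_INZ Z2Nat.id; [lra | lia].
Qed.

Lemma TN_bounds N u : INR N = exp u -> 0 < u ->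
  exp u / u - 1 < INR (TN N) <= exp u / u.
Proof.
move=> EN u_gt0; rewrite /TN EN ln_exp.
by apply: INR_floor_bounds; apply/Rlt_le/Rdiv_lt_0_compat => //; apply: exp_pos.
Qed.

Definition eventually (P : R -> Prop) : Prop := exists U, forall u, U <= u -> P u.

Lemma eventually_and (P Q : R -> Prop) :
  eventually P -> eventually Q -> eventually (fun u => P u /\ Q u).
Proof.
move=> [U1 PU1] [U2 QU2]; exists (Rmax U1 U2) => u le_u; split.
  by apply: PU1; apply: Rle_trans le_u; apply: Rmax_l.
by apply: QU2; apply: Rle_trans le_u; apply: Rmax_r.
Qed.

Lemma eventually_ge a : eventually (Rle a).
Proof. by exists a. Qed.

Lemma eventually_exp_ge c a : 0 < c -> eventually (fun u => a <= exp (c * u)).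
Proof.
move=> c_gt0; exists (ln (Rmax a 1) / c) => u le_u.
apply: Rle_trans (Rmax_l a 1) _; rewrite -[Rmax a 1]exp_ln; last first.
  by apply: Rlt_le_trans (Rmax_r a 1); lra.
apply: exp_le; have := Rmult_le_compat_l c _ _ (Rlt_le _ _ c_gt0) le_u.
by have -> : c * (ln (Rmax a 1) / c) = ln (Rmax a 1) by field; lra.
Qed.

Lemma eventually_ln_ge a : eventually (fun u => a <= ln u).
Proof. by exists (exp a) => u le_u; rewrite -[a]ln_exp; apply: ln_le => //; apply: exp_pos. Qed.

Lemma eventually_ln_le c : 0 < c -> eventually (fun u => ln u <= c * u).
Proof.
move=> c_gt0; exists (Rmax 1 (4 / c ^ 2)) => u le_u.
have u_ge1 : 1 <= u by apply: Rle_trans le_u; apply: Rmax_l.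
have : 4 / c ^ 2 <= u by apply: Rle_trans le_u; apply: Rmax_r.
have c2_gt0 : 0 < c ^ 2 by nra.
rewrite -(ln_exp (c * u)) => le_4u; apply: ln_le; first lra.
apply: Rle_trans (exp_ge_sqr _) ; last nra.
have : 4 <= c ^ 2 * u.
  have := Rmult_le_compat_l (c ^ 2) _ _ (Rlt_le _ _ c2_gt0) le_4u.
  by have -> : c ^ 2 * (4 / c ^ 2) = 4 by field; lra.
nra.
Qed.

Lemma four_sqr_le_exp u : 32 <= u -> 4 * u ^ 2 <= exp u.
Proof.
move=> u_ge32; have -> : exp u = exp (u / 2) ^ 2 by rewrite exp_pow; congr exp; rewrite /=; field.
have := exp_ge_sqr (ltac:(lra) : 0 <= u / 2).
have : 4 * u ^ 2 <= ((u / 2) ^ 2 / 4) ^ 2.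
  have -> : ((u / 2) ^ 2 / 4) ^ 2 = (u ^ 2) ^ 2 / 256 by field.
  have : 1024 <= u ^ 2 by nra.
  move: (u ^ 2) => y; nra.
by move=> le1 le2; apply: Rle_trans le1 _; apply: pow_incr; split; [nra | lra].
Qed.

Section Asymptotics.
Variables alpha delta b : R.
Hypothesis delta_gt0 : 0 < delta.
Hypothesis alpha_lt_b : alpha < b.
Hypothesis half_lt_b : / 2 < b.
Hypothesis b_delta_lt1 : b + 2 * delta < 1.

Lemma eventually_occupancy_exponent :
  eventually (fun u => forall m : nat, INR m <= delta * (u / ln u) + 1 ->
                        2 * (2 * u ^ 2) ^ m * exp (b * u) <= exp u).
Proof.
set g := 1 - b - 2 * delta; have g_gt0 : 0 < g by rewrite /g; lra.
have ln2_gt0 : 0 < ln 2 by have := ln_lt_2; lra.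
have [U facts] := eventually_and (eventually_ge (6 * ln 2 / g))
  (eventually_and (eventually_ln_le (c := g / 6) ltac:(lra))
                  (eventually_ln_ge (Rmax 1 (3 * delta * ln 2 / g)))).
exists U; move=> u /facts[le_u]; set v := ln u => -[ln_le_u ge_ln_u] m le_m.
have v_ge1 : 1 <= v by apply: Rle_trans ge_ln_u; apply: Rmax_l.
have g_ln2_u : 6 * ln 2 <= g * u.
  have := Rmult_le_compat_l g _ _ (Rlt_le _ _ g_gt0) le_u.
  by have -> : g * (6 * ln 2 / g) = 6 * ln 2 by field; lra.
have g_v : 3 * delta * ln 2 <= g * v.
  have := Rmult_le_compat_l g _ _ (Rlt_le _ _ g_gt0) (Rle_trans _ _ _ (Rmax_r 1 _) ge_ln_u).
  by have -> : g * (3 * delta * ln 2 / g) = 3 * delta * ln 2 by field; lra.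
have u_gt0 : 0 < u by nra.
have -> : 2 * u ^ 2 = exp (ln 2 + 2 * v).
  by rewrite exp_plus (_ : 2 * v = v + v) ?exp_plus /v ?exp_ln //=; lra.
rewrite exp_pow [X in X * exp _ * _](_ : 2 = exp (ln 2)); last by rewrite exp_ln; lra.
rewrite -!exp_plus; apply: exp_le.
have : INR m * (ln 2 + 2 * v) <= (delta * (u / v) + 1) * (ln 2 + 2 * v).
  by apply: Rmult_le_compat_r; lra.
have : delta * (u / v) * ln 2 <= g * u / 3.
  apply: (Rmult_le_reg_r v); first lra.
  have -> : delta * (u / v) * ln 2 * v = u * (delta * ln 2) by field; lra.
  by nra.
have -> : (delta * (u / v) + 1) * (ln 2 + 2 * v) =
          delta * (u / v) * ln 2 + 2 * delta * u + ln 2 + 2 * v by field; lra.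
rewrite /g in g_ln2_u ln_le_u *; lra.
Qed.

Lemma occupancy_mean_ge_exp N u m :
  INR N = exp u -> 1 <= ln u -> 4 * u ^ 2 <= exp u ->
  0 < INR m <= delta * (u / ln u) + 1 ->
  2 * (2 * u ^ 2) ^ m * exp (b * u) <= exp u ->
  exp (b * u) <= INR N * (INR 'C(TN N, m) * (INR N - 1) ^ (TN N - m)) / INR N ^ TN N.
Proof.
move=> EN v_ge1 le_4u2 [m_gt0 le_m] le_exp.
have u_gt0 : 0 < u by apply: pos_of_ln_pos; lra.
have u_ge2 : 2 <= u by have := exp_ineq1_le (ln u); rewrite exp_ln //; lra.
have [gt_T le_T] := TN_bounds EN u_gt0.
rewrite EN; set T := TN N in gt_T le_T *; set x := exp u / u in gt_T le_T.
have Ex : exp u = x * u by rewrite /x; field; lra.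
rewrite Ex in le_4u2 le_exp *.
(* [delta < 1/4] since [1/2 < b] and [b + 2 delta < 1]. *)
have le_m_u : INR m <= u / 4 + 1.
  have : u / ln u <= u.
    by apply: (Rmult_le_reg_r (ln u)); [lra | rewrite /Rdiv Rmult_assoc Rinv_l; nra].
  nra.
have le_Tm : x / 2 <= INR T - INR m by nra.
have m_gt0N : (0 < m)%N by move: m_gt0; case: (m) => //=; lra.
have le_mT : (m <= T)%N by apply/leP/INR_le; lra.
have x_gt0 : 0 < x by rewrite /x; apply: Rdiv_lt_0_compat => //; apply: exp_pos.
have le_2x : 2 * x <= x * u by nra.
have K_ge1 : 1 <= x * u by nra.
have mT : (0 < m <= T)%N by rewrite m_gt0N le_mT.
have le_TmK : 2 * (INR T - INR m) <= x * u by lra.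
apply: Rle_trans (occupancy_mean_ge K_ge1 mT le_TmK).
have le_ratio : / (2 * u ^ 2) <= (INR T - INR m) / (INR m * (x * u)).
  apply: (Rmult_le_reg_r (2 * u ^ 2 * (INR m * (x * u)))); first by apply: Rmult_lt_0_compat; nra.
  have -> : / (2 * u ^ 2) * (2 * u ^ 2 * (INR m * (x * u))) = INR m * (x * u) by field; lra.
  have -> : (INR T - INR m) / (INR m * (x * u)) * (2 * u ^ 2 * (INR m * (x * u))) =
            (INR T - INR m) * 2 * u ^ 2 by field; nra.
  nra.
by apply: le_half_mul_pow le_ratio _ _; [nra | apply/Rlt_le/exp_pos |].
Qed.

Lemma exp_le_4TN N u : INR N = exp u -> 1 <= u -> 4 * u ^ 2 <= exp u ->
  u * exp (b * u) <= exp u -> exp (b * u) <= 4 * INR (TN N).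
Proof.
move=> EN u_ge1 le_4u2 le_ub.
have [gt_T _] := TN_bounds EN ltac:(lra).
set x := exp u / u in gt_T; have Ex : exp u = x * u by rewrite /x; field; lra.
rewrite Ex in le_4u2 le_ub; have := exp_pos (b * u).
nra.
Qed.

Lemma exp_neg_le_inv_sq N u : INR N = exp u -> 1 <= u -> 4 * u ^ 2 <= exp u ->
  128 <= exp ((2 * b - 1) * u) ->
  exp (- (exp (b * u) ^ 2 / (32 * INR (TN N)))) <= / ((INR N + 1) * (INR N + 2)).
Proof.
move=> EN u_ge1 le_4u2 le_128.
have [gt_T le_T] := TN_bounds EN ltac:(lra).
have exp_u_ge : 4 * u <= exp u / u.
  apply: (Rmult_le_reg_r u); first lra.
  have -> : exp u / u * u = exp u by field; lra.
  nra.
have T_gt0 : 0 < INR (TN N) by lra.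
have E2 : exp (b * u) ^ 2 = exp u * exp ((2 * b - 1) * u).
  by rewrite exp_pow -exp_plus; congr exp; rewrite /=; ring.
have le_ratio : 4 * u <= exp (b * u) ^ 2 / (32 * INR (TN N)).
  apply: (Rmult_le_reg_r (32 * INR (TN N))); first lra.
  have -> : exp (b * u) ^ 2 / (32 * INR (TN N)) * (32 * INR (TN N)) = exp (b * u) ^ 2.
    by field; lra.
  rewrite E2.
  have : u * INR (TN N) <= exp u.
    have := Rmult_le_compat_l u _ _ (Rle_trans _ _ _ Rle_0_1 u_ge1) le_T.
    by have -> : u * (exp u / u) = exp u by field; lra.
  by have := exp_pos u; nra.
apply: Rle_trans (exp_le (_ : _ <= - (4 * u))) _; first lra.
rewrite exp_Ropp (_ : 4 * u = INR 4 * u) -?exp_pow -?EN; last by rewrite /=; ring.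
apply: Rinv_le_contravar; first by have := pos_INR N; nra.
have : 4 <= INR N by rewrite EN; nra.
move: (INR N) => K K_ge4; have : 16 <= K ^ 2 by nra.
rewrite /=; nra.
Qed.

Lemma heavy_bins_whp : exists U, forall N : nat, U <= ln (INR N) ->
  1 - / ((INR N + 1) * (INR N + 2)) <=
  unifP (fun w : {ffun 'I_(TN N) -> 'I_N} => good_event alpha delta w).
Proof.
have [U facts] :=
  eventually_and (eventually_and (eventually_ln_ge 1) (eventually_ge 32))
  (eventually_and (eventually_ln_le (c := 1 - b) ltac:(lra))
  (eventually_and (eventually_exp_ge (c := b - alpha) 2 ltac:(lra))
  (eventually_and (eventually_exp_ge (c := 2 * b - 1) 128 ltac:(lra))
                  eventually_occupancy_exponent))).
exists U => N /facts[[v_ge1 u_ge32] [ln_le [exp_ge2 [exp_ge128 occupancy]]]].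
set u := ln (INR N) in v_ge1 u_ge32 ln_le exp_ge2 exp_ge128 occupancy *.
have N_gt0R : 0 < INR N by apply: pos_of_ln_pos; rewrite -/u; lra.
have N_gt0 : (0 < N)%N by move: N_gt0R; case: (N) => //=; lra.
have EN : INR N = exp u by rewrite exp_ln.
have le_4u2 : 4 * u ^ 2 <= exp u by apply: four_sqr_le_exp.
have le_ub : u * exp (b * u) <= exp u.
  rewrite -[u in u * _]exp_ln; last lra.
  by rewrite -exp_plus; apply: exp_le; lra.
have le_alpha : 2 * Rpower (INR N) alpha <= exp (b * u).
  rewrite /Rpower -/u (_ : b * u = (b - alpha) * u + alpha * u) ?exp_plus; last ring.
  by have := exp_pos (alpha * u); nra.
have HN_ge0 : 0 <= delta * HN N.
  by rewrite /HN -/u; apply: Rmult_le_pos; [lra | apply/Rlt_le/Rdiv_lt_0_compat; lra].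
set m := (Z.to_nat (Int_part (delta * HN N)) + 1)%N.
have [lt_m le_m] : delta * HN N < INR m <= delta * HN N + 1.
  by have := INR_floor_bounds HN_ge0; rewrite /m plus_INR /=; lra.
have le_mean := avg_heavy_bins_ge (c := delta * HN N) (TN N) N_gt0 lt_m.
apply: Rle_trans (good_event_prob N_gt0 le_alpha (exp_le_4TN EN _ le_4u2 le_ub) _).
- apply: Rplus_le_compat_l; apply: Ropp_le_contravar.
  by apply: exp_neg_le_inv_sq; rewrite -/u; lra.
- lra.
apply: Rle_trans le_mean; apply: occupancy_mean_ge_exp EN v_ge1 le_4u2 _ (occupancy _ _).
  all: rewrite /HN -/u in HN_ge0 lt_m le_m; lra.
Qed.
End Asymptotics.

Lemma unifP_ge0 (T : finType) (P : {pred T}) : 0 <= unifP P.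
Proof.
rewrite /unifP; case: (Req_dec (INR #|T|) 0) => [->|T_neq0].
  by rewrite /Rdiv Rinv_0 Rmult_0_r; lra.
apply: Rmult_le_pos; first exact: pos_INR.
by apply/Rlt_le/Rinv_0_lt_compat; have := pos_INR #|T|; lra.
Qed.

Lemma sum_inv_succ_prod M n :
  sum_f_R0 (fun k => M / ((INR k + 1) * (INR k + 2))) n = M * (1 - / (INR n + 2)).
Proof.
elim: n => [|n IH]; first by rewrite /=; field.
by rewrite tech5 IH S_INR; have := pos_INR n => n_ge0; field; lra.
Qed.

Lemma lt_INR_up r : 0 < r -> r < INR (Z.to_nat (up r)).
Proof.
move=> r_gt0; have [gt_up _] := archimed r.
have /lt_IZR up_gt0 : IZR 0 < IZR (up r) by lra.
by rewrite INR_IZR_INZ Z2Nat.id //; lia.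
Qed.

Lemma infinite_sum_inv_succ_prod M : 0 <= M ->
  infinite_sum (fun k => M / ((INR k + 1) * (INR k + 2))) M.
Proof.
move=> M_ge0 e e_gt0.
have Me_ge0 : 0 <= M / e by apply: Rmult_le_pos => //; apply/Rlt_le/Rinv_0_lt_compat.
exists (Z.to_nat (up (M / e + 1))) => n le_n.
have lt_n : M / e < INR n.
  have := lt_INR_up (ltac:(lra) : 0 < M / e + 1).
  by have := le_INR _ _ le_n; lra.
have n_ge0 := pos_INR n.
rewrite sum_inv_succ_prod /Rdist.
have -> : M * (1 - / (INR n + 2)) - M = - (M / (INR n + 2)) by field; lra.
rewrite Rabs_Ropp Rabs_pos_eq; last first.
  by apply: Rmult_le_pos => //; apply/Rlt_le/Rinv_0_lt_compat; lra.
apply: (Rmult_lt_reg_r (INR n + 2)); first lra.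
have -> : M / (INR n + 2) * (INR n + 2) = M by field; lra.
have lt_M : M < e * INR n.
  have := Rmult_lt_compat_l e _ _ e_gt0 lt_n.
  by have -> : e * (M / e) = M by field; lra.
nra.
Qed.

Lemma summable_error_of_large (p : nat -> R) (U : R) :
  (forall N, 0 <= p N) ->
  (forall N : nat, U <= ln (INR N) -> 1 - / ((INR N + 1) * (INR N + 2)) <= p N) ->
  exists eps : nat -> R, (forall N, 0 <= eps N) /\ (exists l, infinite_sum eps l) /\
                         (forall N, 1 - eps N <= p N).
Proof.
move=> p_ge0 p_large.
(* Rescaling by [M] makes [eps N >= 1], i.e. the bound trivial, below the threshold [N0]. *)
set N0 := Z.to_nat (up (exp U)); set M := (INR N0 + 1) * (INR N0 + 2).
have M_ge1 : 1 <= M by have := pos_INR N0; rewrite /M; nra.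
exists (fun N => M / ((INR N + 1) * (INR N + 2))); split; [|split].
- move=> N; have := pos_INR N => N_ge0.
  by apply: Rmult_le_pos; [lra | apply/Rlt_le/Rinv_0_lt_compat; nra].
- by exists M; apply: infinite_sum_inv_succ_prod; lra.
move=> N; have N_ge0 := pos_INR N; have prod_gt0 : 0 < (INR N + 1) * (INR N + 2) by nra.
have inv_gt0 := Rinv_0_lt_compat _ prod_gt0.
have [lt_N_N0 | le_N0_N] := ltnP N N0.
  have : INR N + 1 <= INR N0 by rewrite -S_INR; apply/le_INR/leP.
  move=> le_N1; have : M / ((INR N + 1) * (INR N + 2)) >= 1.
    apply: Rle_ge; apply: (Rmult_le_reg_r ((INR N + 1) * (INR N + 2))) => //.
    by rewrite /Rdiv Rmult_assoc Rinv_l; [rewrite /M; nra | lra].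
  by have := p_ge0 N; lra.
have : U <= ln (INR N).
  rewrite -[U]ln_exp; apply: ln_le; first exact: exp_pos.
  apply/Rlt_le/(Rlt_le_trans _ _ _ (lt_INR_up (exp_pos U))).
  exact/le_INR/leP.
move=> /p_large; have : / ((INR N + 1) * (INR N + 2)) <= M / ((INR N + 1) * (INR N + 2)).
  by rewrite /Rdiv; nra.
lra.
Qed.

Theorem lemma5p2 (alpha delta : R) :
  (/ 2 <= alpha < 1)%R ->
  (0 < delta < (1 - alpha) / 2)%R ->
  exists eps : nat -> R,
    (forall N, 0 <= eps N)%R /\
    (exists l : R, infinite_sum eps l) /\
    (forall N : nat,
       1 - eps N <= unifP (fun w : {ffun 'I_(TN N) -> 'I_N} => good_event alpha delta w))%R.
Proof.
move=> [half_le_alpha alpha_lt1] [delta_gt0 delta_lt].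
have [U whp] := @heavy_bins_whp alpha delta ((1 + alpha - 2 * delta) / 2) delta_gt0
  ltac:(lra) ltac:(lra) ltac:(lra).
apply: summable_error_of_large whp => N; exact: unifP_ge0.
Qed.
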